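(* Let $K$ be a field (of arbitrary characteristic), $\phi$ the $K$-algebra endomorphism of $K[x]$ with $\phi(x)=w(x)$ where $\deg w(x)\ge 2$, and $\delta=\mathrm{id}-\phi$. If $f\in K[x]$ satisfies $f^i\in\operatorname{Im}\delta$ for all $1\le i\le 3$, then $f=0$. Consequently, $\mathfrak{r}(\operatorname{Im}\delta)=\{0\}$, and $\delta$ maps every $K$-subspace of $K[x]$ to a Mathieu subspace of $K[x]$.
   Context: $\mathrm{id}$ is the identity map of $K[x]$. For a subset $V$ of $K[x]$, $\mathfrak{r}(V)=\{a\in K[x]\mid a^m\in V\text{ for all } m\gg0\}$. A $K$-subspace $V$ of a commutative $K$-algebra $\mathcal{A}$ is a Mathieu subspace if for all $a,b\in\mathcal{A}$ with $a^m\in V$ for all $m\ge 1$, one has $a^mb\in V$ for all $m\gg 0$. *)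

From mathcomp Require Import all_boot all_order all_algebra.
Set Implicit Arguments. Unset Strict Implicit. Unset Printing Implicit Defensive.
Import GRing.Theory.
Local Open Scope ring_scope.

Definition phi (K : fieldType) (w : {poly K}) (p : {poly K}) : {poly K} := p \Po w.

Definition delta (K : fieldType) (w : {poly K}) (p : {poly K}) : {poly K} :=
  p - phi w p.

Definition image_of (K : fieldType) (f : {poly K} -> {poly K})
  (V : {poly K} -> Prop) : {poly K} -> Prop :=
  fun a => exists2 v, V v & a = f v.

Definition ImP (K : fieldType) (f : {poly K} -> {poly K}) : {poly K} -> Prop :=
  fun a => exists v, a = f v.

Definition rset (K : fieldType) (V : {poly K} -> Prop) : {poly K} -> Prop :=
  fun a => exists N : nat, forall m : nat, (N <= m)%N -> V (a ^+ m).

Definition is_subspace (K : fieldType) (V : {poly K} -> Prop) : Prop :=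
  V 0 /\ (forall (c : K) (u v : {poly K}), V u -> V v -> V (c *: u + v)).

Definition is_Mathieu (K : fieldType) (V : {poly K} -> Prop) : Prop :=
  is_subspace V /\
  forall a b : {poly K},
    (forall m : nat, (1 <= m)%N -> V (a ^+ m)) ->
    exists N : nat, forall m : nat, (N <= m)%N -> V (a ^+ m * b).

From HB Require Import structures.
From mathcomp Require Import all_boot all_order all_algebra.
From mathcomp Require Import zify ring.
Set Implicit Arguments. Unset Strict Implicit. Unset Printing Implicit Defensive.
Import GRing.Theory.
Local Open Scope ring_scope.

(* Write C h = h \Po w and K[w] for the image of C.  If f = p - C p, f^2 = q - C q
   and f^3 = r - C r, then C (q + p^2) - (q + p^2) = p (2 C p) - 2 p^2, and likewise
   C (r - p^3) - (r - p^3) = - 3 p (C p)^2 + 3 p^2 C p.  Since deg (C u - u) =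
   (deg w)(deg u), this exhibits p G + v in K[w] with 0 <> G in K[w] and deg v <= deg G
   (using the cube only when 2 = 0 in K, where 3 = 1), and peeling off leading terms
   c w^e then gives p = C p'.  Hence f = C f' with f' = p' - C p', whose powers are
   again in Im delta, and deg f = (deg w)(deg f') > deg f' unless f' = 0: f = 0 by
   descent on the degree. *)

Lemma size_sub_lead (R : fieldType) (a b : {poly R}) :
  b != 0 -> size b = size a ->
  (size (a - (lead_coef a / lead_coef b) *: b)%R < size a)%N.
Proof.
move=> nz_b eq_ba; have nz_a : a != 0 by rewrite -size_poly_eq0 -eq_ba size_poly_eq0.
set c := _ / _; have nz_c : c != 0 by rewrite mulf_neq0 ?invr_eq0 ?lead_coef_eq0.
have size_cb : size (c *: b) = size a by rewrite size_scale.
have le_size : (size (a - c *: b)%R <= size a)%N.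
  by rewrite (leq_trans (size_polyD _ _)) // size_polyN size_cb maxnn.
rewrite ltn_neqAle le_size andbT; apply: contra nz_a => /eqP eq_size.
have : lead_coef (a - c *: b) == 0.
  rewrite /lead_coef eq_size coefB -{2}size_cb.
  by rewrite -[(c *: b)`_ _]/(lead_coef _) lead_coefZ divfK ?lead_coef_eq0 ?subrr.
by rewrite lead_coef_eq0 -size_poly_eq0 eq_size size_poly_eq0.
Qed.

Lemma size_mulrn (R : idomainType) (p : {poly R}) n :
  n%:R != 0 :> R -> size (p *+ n) = size p.
Proof. by move=> nz_n; rewrite -scaler_nat size_scale. Qed.

Lemma delta_is_linear (K : fieldType) (w : {poly K}) : linear (delta w).
Proof.
by move=> c p q; rewrite /delta /phi comp_polyD comp_polyZ scalerBr addrACA opprD.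
Qed.

HB.instance Definition _ (K : fieldType) (w : {poly K}) :=
  GRing.isLinear.Build K {poly K} {poly K} *:%R (delta w) (delta_is_linear w).

Lemma is_subspace_image (K : fieldType) (f : {linear {poly K} -> {poly K}})
    (V : {poly K} -> Prop) :
  is_subspace V -> is_subspace (image_of f V).
Proof.
move=> [V0 VD]; split; first by exists 0; rewrite ?raddf0.
move=> c _ _ [u Vu ->] [v Vv ->].
by exists (c *: u + v); [exact: VD | rewrite linearP].
Qed.

Lemma Mathieu_of_powers_eq0 (K : fieldType) (V : {poly K} -> Prop) :
  is_subspace V ->
  (forall a, (forall m, (1 <= m)%N -> V (a ^+ m)) -> a = 0) -> is_Mathieu V.
Proof.
move=> sV nilV; split=> // a b /nilV ->.
by exists 1%N => -[|m] // _; rewrite exprS !mul0r; exact: sV.1.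
Qed.

Section CompositionWithW.
Variables (K : fieldType) (w : {poly K}).
Hypothesis hw : (2 < size w)%N.

Let deg_w_ge2 : (2 <= (size w).-1)%N. Proof. by case: (size w) hw => [|[|[|]]]. Qed.

Definition in_Kw (h : {poly K}) := exists g, h = g \Po w.

Lemma deltaE (p : {poly K}) : delta w p = p - (p \Po w). Proof. by []. Qed.

Lemma in_Kw_const (p : {poly K}) : (size p <= 1)%N -> in_Kw p.
Proof. by move/size1_polyC->; exists (p`_0)%:P; rewrite comp_polyC. Qed.

Lemma comp_poly_exp (h : {poly K}) n : (h ^+ n) \Po w = (h \Po w) ^+ n.
Proof. exact: rmorphXn. Qed.

(* Restated inside the section so that [lia] sees the same [size] terms as the goals. *)
Lemma deg_comp (h : {poly K}) :
  (size (h \Po w)).-1 = ((size h).-1 * (size w).-1)%N.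
Proof. exact: size_comp_poly. Qed.

Lemma ltn_size_comp (h : {poly K}) : (1 < size h)%N -> (size h < size (h \Po w))%N.
Proof. by move=> h_gt1; have := deg_comp h; nia. Qed.

Lemma delta_const (p : {poly K}) : (size p <= 1)%N -> delta w p = 0.
Proof. by move/size1_polyC->; rewrite deltaE comp_polyC subrr. Qed.

Lemma deg_delta (p : {poly K}) : (size (delta w p)).-1 = ((size p).-1 * (size w).-1)%N.
Proof.
have [le_p1 | p_gt1] := leqP (size p) 1.
  by rewrite delta_const // size_poly0; lia.
by rewrite deltaE addrC size_polyDl !size_polyN ?deg_comp ?ltn_size_comp.
Qed.

Lemma size_delta_gt1 (p : {poly K}) : delta w p != 0 -> (1 < size (delta w p))%N.
Proof.
move=> nz_dp; have p_gt1 : (1 < size p)%N.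
  by rewrite ltnNge; apply: contra nz_dp => /delta_const/eqP.
by have := deg_delta p; nia.
Qed.

Lemma in_Kw_of_mul_add (a G v : {poly K}) :
  in_Kw G -> G != 0 -> (size v <= size G)%N -> in_Kw (a * G + v) -> in_Kw a.
Proof.
move=> [g def_G] nz_G le_vG; have [n] := ubnP (size a).
elim: n a => // n IHn a lt_a_n [s def_s].
have [/in_Kw_const // | a_gt1] := leqP (size a) 1.
have nz_a : a != 0 by rewrite -size_poly_eq0; lia.
have size_aG : size (a * G) = (size a + size G).-1 := size_mul nz_a nz_G.
have size_aGv : size (a * G + v) = size (a * G).
  by rewrite size_polyDl // size_aG; have := polySpred nz_G; lia.
have [e deg_a] : exists e, (size a).-1 = (e * (size w).-1)%N.
  have dvd_G : ((size w).-1 %| (size G).-1)%N by rewrite def_G deg_comp dvdn_mull.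
  have : ((size w).-1 %| (size (a * G + v)%R).-1)%N by rewrite def_s deg_comp dvdn_mull.
  have -> : (size (a * G + v)%R).-1 = ((size a).-1 + (size G).-1)%N.
    by rewrite size_aGv size_aG; have := polySpred nz_G; lia.
  by rewrite dvdn_addl // => /dvdnP.
have nz_we : w ^+ e != 0 by rewrite expf_neq0 // -size_poly_gt0 (ltn_trans _ hw).
have size_we : size (w ^+ e) = size a.
  by rewrite (polySpred nz_we) size_exp mulnC -deg_a prednK //; lia.
set k := lead_coef a / lead_coef (w ^+ e).
have [a' def_a'] : in_Kw (a - k *: w ^+ e).
  apply: IHn; first exact: leq_trans (size_sub_lead nz_we size_we) lt_a_n.
  exists (s - k *: 'X^e * g).
  rewrite comp_polyB comp_polyM comp_polyZ comp_Xn_poly -def_s -def_G.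
  by rewrite mulrBl addrAC.
exists (a' + k *: 'X^e).
by rewrite comp_polyD comp_polyZ comp_Xn_poly -def_a' subrK.
Qed.

Lemma in_Kw_of_comp_shift (a G u v : {poly K}) :
  in_Kw G -> G != 0 -> (size a <= size G)%N -> (size v <= size G)%N ->
  u \Po w = u + a * G + v -> in_Kw a.
Proof.
move=> KwG nz_G le_aG le_vG def_u.
have le_uG : (size u <= size G)%N.
  have : ((size u).-1 * (size w).-1)%N = (size (a * G + v)%R).-1.
    rewrite -deg_delta (_ : delta w u = - (a * G + v)) ?size_polyN //.
    by rewrite deltaE def_u; ring.
  have : (size (a * G + v)%R <= maxn (size (a * G)%R) (size v))%N := size_polyD _ _.
  have : (size (a * G)%R <= (size a + size G).-1)%N := size_polyMleq _ _.
  have : (0 < size G)%N by rewrite size_poly_gt0.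
  by nia.
apply: (in_Kw_of_mul_add KwG nz_G (v := u + v)).
  by rewrite (leq_trans (size_polyD _ _)) // geq_max le_uG.
by exists u; rewrite def_u addrCA addrA.
Qed.

Lemma in_Kw_of_delta_sqr (p q : {poly K}) :
  (2 : K) != 0 -> delta w p ^+ 2 = delta w q -> in_Kw p.
Proof.
move=> nz_2 sqr_p; have [/in_Kw_const // | p_gt1] := leqP (size p) 1.
set g := p \Po w.
have lt_pg : (size p < size g)%N := ltn_size_comp p_gt1.
have deg_g : (size g).-1 = ((size p).-1 * (size w).-1)%N := deg_comp p.
have deg_p2 : (size (p ^+ 2)).-1 = ((size p).-1 * 2)%N := size_exp p 2.
have size_G : size (g *+ 2) = size g := size_mulrn g nz_2.
have size_v : size (- (p ^+ 2 *+ 2)) = size (p ^+ 2) by rewrite size_polyN size_mulrn.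
have comp_q : q \Po w = q - (p - g) ^+ 2.
  by rewrite -[p - g]/(delta w p) sqr_p deltaE; ring.
apply: (in_Kw_of_comp_shift (G := g *+ 2) (u := q + p ^+ 2)
                            (v := - (p ^+ 2 *+ 2))).
- by exists (p *+ 2); rewrite raddfMn.
- by rewrite -size_poly_gt0 size_G; lia.
- by rewrite size_G ltnW.
- rewrite size_G size_v.
  by have := leq_mul (leqnn (size p).-1) deg_w_ge2; lia.
- by rewrite comp_polyD comp_poly_exp -/g comp_q; ring.
Qed.

Lemma in_Kw_of_delta_cube (p r : {poly K}) :
  (3 : K) != 0 -> delta w p ^+ 3 = delta w r -> in_Kw p.
Proof.
move=> nz_3 cube_p; have [/in_Kw_const // | p_gt1] := leqP (size p) 1.
set g := p \Po w.
have lt_pg : (size p < size g)%N := ltn_size_comp p_gt1.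
have nz_g2 : g ^+ 2 != 0 by rewrite expf_neq0 // -size_poly_gt0 (leq_ltn_trans _ lt_pg).
have deg_g : (size g).-1 = ((size p).-1 * (size w).-1)%N := deg_comp p.
have deg_g2 : (size (g ^+ 2)).-1 = ((size g).-1 * 2)%N := size_exp g 2.
have deg_p2 : (size (p ^+ 2)).-1 = ((size p).-1 * 2)%N := size_exp p 2.
have size_G : size (- (g ^+ 2 *+ 3)) = size (g ^+ 2) by rewrite size_polyN size_mulrn.
have size_v : size (p ^+ 2 * g *+ 3) = size (p ^+ 2 * g) by rewrite size_mulrn.
have le_v : (size (p ^+ 2 * g)%R <= (size (p ^+ 2) + size g).-1)%N := size_polyMleq _ _.
have comp_r : r \Po w = r - (p - g) ^+ 3.
  by rewrite -[p - g]/(delta w p) cube_p deltaE; ring.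
apply: (in_Kw_of_comp_shift (G := - (g ^+ 2 *+ 3)) (u := r - p ^+ 3)
                            (v := p ^+ 2 * g *+ 3)).
- exists (- (p ^+ 2 *+ 3)).
  by rewrite (raddfN (comp_poly w)) (raddfMn (comp_poly w)) /= comp_poly_exp.
- by rewrite -size_poly_gt0 size_G size_poly_gt0.
- by rewrite size_G; have := polySpred nz_g2; lia.
- rewrite size_G size_v; have : size (g ^+ 2) = (size (g ^+ 2)).-1.+1 := polySpred nz_g2.
  by have := leq_mul (leqnn (size p).-1) deg_w_ge2; lia.
- by rewrite comp_polyB comp_poly_exp -/g comp_r; ring.
Qed.

Lemma in_Kw_of_delta_powers (p q r : {poly K}) :
  delta w p ^+ 2 = delta w q -> delta w p ^+ 3 = delta w r -> in_Kw p.
Proof.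
move=> sqr_p cube_p; have [char2 | nz_2] := eqVneq (2 : K) 0.
  by apply: in_Kw_of_delta_cube cube_p; rewrite (natrD _ 2 1) char2 add0r oner_neq0.
exact: in_Kw_of_delta_sqr sqr_p.
Qed.

Lemma ImP_delta_comp (h : {poly K}) : ImP (delta w) (h \Po w) -> ImP (delta w) h.
Proof.
by move=> [s def_s]; exists (h + s); rewrite deltaE comp_polyD def_s deltaE; ring.
Qed.

Lemma delta_powers_eq0 (f : {poly K}) :
  (forall i, (1 <= i <= 3)%N -> ImP (delta w) (f ^+ i)) -> f = 0.
Proof.
have [n] := ubnP (size f); elim: n f => // n IHn f lt_f_n pow_f.
case: (pow_f 1%N isT) (pow_f 2%N isT) (pow_f 3%N isT) => p f_p [q f2_q] [r f3_r].
rewrite expr1 in f_p; rewrite f_p in f2_q f3_r.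
have [p' def_p] := in_Kw_of_delta_powers f2_q f3_r.
set f' := delta w p'.
have def_f : f = f' \Po w by rewrite f_p def_p !deltaE comp_polyB.
have [f'0 | nz_f'] := eqVneq f' 0; first by rewrite def_f f'0 comp_poly0.
suff f'0 : f' = 0 by rewrite f'0 eqxx in nz_f'.
apply: IHn => [|i /pow_f]; last by rewrite def_f -comp_poly_exp; apply: ImP_delta_comp.
by rewrite -ltnS (leq_trans _ lt_f_n) // ltnS def_f ltn_size_comp // size_delta_gt1.
Qed.

End CompositionWithW.

Theorem proposition3p7 (K : fieldType) (w : {poly K}) (hw : (2 < size w)%N) :
  (forall f : {poly K},
     (forall i : nat, (1 <= i <= 3)%N -> ImP (delta w) (f ^+ i)) -> f = 0)
  /\ (forall a : {poly K}, rset (ImP (delta w)) a <-> a = 0)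
  /\ (forall V : {poly K} -> Prop, is_subspace V ->
        is_Mathieu (image_of (delta w) V)).
Proof.
have nil_Im := delta_powers_eq0 hw.
split=> //; split=> [a | V sV].
  split=> [[N pow_a] | ->].
    have /eqP : a ^+ N.+1 = 0.
      by apply: nil_Im => i /andP[i_ge1 _]; rewrite -exprM; apply: pow_a; nia.
    by rewrite expf_eq0 => /andP[_ /eqP].
  by exists 1%N => -[|m] // _; exists 0; rewrite raddf0 exprS mul0r.
apply: Mathieu_of_powers_eq0; first exact: is_subspace_image.
move=> a pow_a; apply: nil_Im => i /andP[i_ge1 _].
by have [v _ ->] := pow_a i i_ge1; exists v.
Qed.
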